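(* Let $r$ be a positive integer and let $n\in F_r$. Then $\displaystyle R(n)<\frac{J_r}{r}\,Q_1(n)\,(Q_1(n)-r)$.
   Context: For a positive integer $r$, $S_r$ is the multiplicative arithmetic function with $S_r(p^{\alpha})=0$ if $p\leq r$ and $S_r(p^{\alpha})=p^{\alpha-1}(p-r)$ if $p>r$, for all primes $p$ and positive integers $\alpha$. $B_r=\{n\in\mathbb{N}: S_r(n)>0\}$ (positive integers whose smallest prime factor exceeds $r$, together with $1$). $F_r$ is the set of $n\in B_r$ such that $S_r(n)<S_r(m)$ for all $m\in B_r$ with $m>n$. $R(n)=n\prod_{p\text{ prime},\,p\mid n}p^{-1}$. $Q_1(n)$ is the smallest prime that is larger than $r$ and does not divide $n$. $r\#$ is the product of all primes $\leq r$ (with $1\#=1$). The Jacobsthal function $J(m)$ is the smallest positive integer $a$ such that every set of $a$ consecutive integers contains an element coprime to $m$; $J_r=J(r\#)$. *)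

From mathcomp Require Import all_boot all_order all_algebra.
Set Implicit Arguments. Unset Strict Implicit. Unset Printing Implicit Defensive.

(* S_r(n) = prod_{p^a || n} S_r(p^a), with S_r(p^a) = p^(a-1) (p - r);
   truncated subtraction gives p - r = 0 exactly when p <= r. *)
Definition S (r n : nat) : nat :=
  \prod_(p <- primes n) (p ^ (logn p n).-1 * (p - r)).

Definition inB (r n : nat) : bool := (0 < n) && (0 < S r n).

Definition inF (r n : nat) : Prop :=
  inB r n /\ forall m, inB r m -> n < m -> S r n < S r m.

Definition Rn (n : nat) : nat := n %/ \prod_(p <- primes n) p.

Definition is_Q1 (r n q : nat) : Prop :=
  [/\ prime q, r < q, ~~ (q %| n) &
      forall p, prime p -> r < p -> ~~ (p %| n) -> q <= p].

Definition primorial (r : nat) : nat := \prod_(p < r.+1 | prime p) p.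

Definition jacob_prop (m a : nat) : Prop :=
  forall k : int, exists2 i : nat, i < a & coprimez (k + i%:Z) m%:Z.

Definition is_Jacobsthal (m a : nat) : Prop :=
  [/\ 0 < a, jacob_prop m a & forall b, 0 < b -> jacob_prop m b -> a <= b].

From mathcomp Require Import all_boot all_order all_algebra.
From mathcomp Require Import ring zify.
Import GRing.Theory Num.Theory.

Set Implicit Arguments.
Unset Strict Implicit.

(* Write n = R(n) rad(n).  If R(n) r >= J q (q - r), the Jacobsthal property of
   r# yields j in (R(n)/q, R(n)/q + J] coprime to r#.  Then m = rad(n) q j lies in
   B_r, exceeds n because q j > R(n), and S_r(m) <= S_r(rad n) (q - r) j
   <= S_r(rad n) R(n) = S_r(n), contradicting n \in F_r. *)

Definition rad (n : nat) : nat := \prod_(p <- primes n) p.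

Definition S_factor (r m p : nat) : nat :=
  if p \in primes m then p ^ (logn p m).-1 * (p - r) else 1.

Lemma S_prod_range r m N :
  0 < m -> m < N -> S r m = \prod_(0 <= p < N) S_factor r m p.
Proof.
move=> m0 mN; rewrite /S -(filter_pi_of mN) big_filter big_mkcond.
by apply: eq_bigr => p _; rewrite /S_factor.
Qed.

Lemma prod_range_logn b N :
  0 < b -> b < N -> b = \prod_(0 <= p < N) p ^ logn p b.
Proof.
move=> b0 bN; have bN' : b <= N.-1 by rewrite -ltnS prednK // (leq_ltn_trans _ bN).
by rewrite -{1}(partnT b0) (widen_partn _ bN') prednK ?(leq_ltn_trans _ bN).
Qed.

(* Compared prime by prime: S_r(p^(x+y)) = p^y S_r(p^x) and S_r(p^y) <= p^y. *)
Lemma S_mul_le r a b : 0 < a -> 0 < b -> S r (a * b) <= S r a * b.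
Proof.
move=> a0 b0; have ab0 : 0 < a * b by rewrite muln_gt0 a0.
rewrite (S_prod_range r ab0 (ltnSn _)) (S_prod_range r a0 (_ : a < (a * b).+1));
  last by rewrite ltnS leq_pmulr.
rewrite [X in _ <= _ * X](prod_range_logn b0 (_ : b < (a * b).+1));
  last by rewrite ltnS leq_pmull.
rewrite -big_split /=; apply: leq_prod => p _.
rewrite /S_factor primesM // lognM //.
have [pa | pa] := boolP (p \in primes a) => /=.
  have : 0 < logn p a by rewrite logn_gt0.
  case: (logn p a) => // la _.
  by rewrite addSn /= -mulnA [_ * p ^ _]mulnC mulnA -expnD.
move: pa; rewrite mul1n -(logn_gt0 p a) lt0n => /negbNE/eqP ->; rewrite add0n.
case: ifP => pb; last by move: pb; rewrite -(logn_gt0 p b) lt0n => /negbFE/eqP ->.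
have : 0 < logn p b by rewrite logn_gt0.
by case: (logn p b) => // lb _ /=; rewrite expnSr leq_mul2l leq_subr orbT.
Qed.

Lemma S_mul_prime r d q : 0 < d -> prime q -> ~~ (q %| d) ->
  S r (d * q) = S r d * (q - r).
Proof.
move=> d0 pq qd; have q0 := prime_gt0 pq.
have dq0 : 0 < d * q by rewrite muln_gt0 d0.
have qN : q < (d * q).+1 by rewrite ltnS leq_pmull.
rewrite (S_prod_range r dq0 (ltnSn _)) (S_prod_range r d0 (_ : d < (d * q).+1));
  last by rewrite ltnS leq_pmulr.
have -> : q - r = \prod_(0 <= p < (d * q).+1) (if p == q then q - r else 1).
  by rewrite -big_mkcond big_nat1_eq qN.
rewrite -big_split /=; apply: eq_bigr => p _.
rewrite /S_factor primesM // [primes q]primes_prime // inE lognM //.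
rewrite [logn p q]logn_prime //.
have [-> | _] := eqP; last by rewrite orbF addn0 muln1.
have -> : (q \in primes d) = false by rewrite mem_primes pq d0 (negbTE qd).
by rewrite /= logn_coprime ?prime_coprime.
Qed.

Lemma rad_gt0 n : 0 < rad n.
Proof.
rewrite /rad big_seq; apply: prodn_cond_gt0 => p pn.
by apply: prime_gt0; exact: (allP (all_prime_primes n)).
Qed.

Lemma logn_prod_primes s p :
  uniq s -> all prime s -> logn p (\prod_(x <- s) x) = (p \in s).
Proof.
elim: s => [|x s IH] /=; first by rewrite big_nil logn1.
case/andP => xs us /andP [px ps].
have s0 : 0 < \prod_(y <- s) y.
  by rewrite big_seq; apply: prodn_cond_gt0 => y ys; apply: prime_gt0; exact: (allP ps).
rewrite big_cons (lognM _ (prime_gt0 px) s0) (IH us ps) logn_prime // inE.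
by case: eqP => [->|] //=; rewrite (negbTE xs).
Qed.

Lemma logn_rad n p : logn p (rad n) = (p \in primes n).
Proof. by rewrite logn_prod_primes ?primes_uniq ?all_prime_primes. Qed.

Lemma primes_rad n : primes (rad n) = primes n.
Proof.
by apply/eq_primes => p; rewrite -logn_gt0 logn_rad; case: (p \in primes n).
Qed.

Lemma S_rad r n : S r (rad n) = \prod_(p <- primes n) (p - r).
Proof.
rewrite /S primes_rad; apply: eq_big_seq => p pn.
by rewrite logn_rad pn expn0 mul1n.
Qed.

Lemma prod_primes_logn_pred_rad n : 0 < n ->
  n = (\prod_(p <- primes n) p ^ (logn p n).-1) * rad n.
Proof.
move=> n0; rewrite {1}(prod_prime_decomp n0) prime_decompE big_map -big_split.
by apply: eq_big_seq => p pn /=; rewrite -expnSr prednK // logn_gt0.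
Qed.

Lemma Rn_prod_primes_logn_pred n : 0 < n ->
  Rn n = \prod_(p <- primes n) p ^ (logn p n).-1.
Proof.
by move=> n0; rewrite /Rn -/(rad n) {1}(prod_primes_logn_pred_rad n0) mulnK ?rad_gt0.
Qed.

Lemma Rn_mul_rad n : 0 < n -> n = Rn n * rad n.
Proof.
by move=> n0; rewrite Rn_prod_primes_logn_pred -?prod_primes_logn_pred_rad.
Qed.

Lemma S_Rn_rad r n : 0 < n -> S r n = Rn n * S r (rad n).
Proof. by move=> n0; rewrite S_rad Rn_prod_primes_logn_pred // /S -big_split. Qed.

Lemma S_gt0 r m : (forall p, p \in primes m -> r < p) -> 0 < S r m.
Proof.
move=> primes_gt; rewrite /S big_seq; apply: prodn_cond_gt0 => p pm.
rewrite muln_gt0 expn_gt0 subn_gt0 primes_gt // andbT.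
by rewrite prime_gt0 // (allP (all_prime_primes m)).
Qed.

Lemma S_gt0_primes_gt r m p : 0 < S r m -> p \in primes m -> r < p.
Proof.
move=> Sm0 pm; have := @gt0_prodn_seq _ _ _ _ Sm0 _ pm isT.
by rewrite muln_gt0 subn_gt0 => /andP [].
Qed.

Lemma dvdn_primorial r p : prime p -> p <= r -> p %| primorial r.
Proof.
move=> pp pr; have pr1 : p < r.+1 by [].
by rewrite /primorial (bigD1 (Ordinal pr1)) //= dvdn_mulr.
Qed.

Lemma coprime_primorial_dvd_gt r j p :
  coprime j (primorial r) -> prime p -> p %| j -> r < p.
Proof.
move=> cj pp pj; rewrite ltnNge; apply/negP => pr.
by have := coprime_dvdl pj cj; rewrite prime_coprime // dvdn_primorial.
Qed.

Lemma jacob_prop_window m J a :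
  jacob_prop m J -> exists2 j, a < j <= a + J & coprime j m.
Proof.
move=> jacobJ; have [i iJ] := jacobJ (Posz a.+1).
rewrite -PoszD coprimezE => cop; exists (a.+1 + i) => //.
by rewrite addSn ltnS leq_addr /= -addnS leq_add2l.
Qed.

Lemma window_mul_le R q r a J :
  r < q -> a * q <= R -> J * q * (q - r) <= R * r -> (a + J) * (q - r) <= R.
Proof. move=> rq aqR JR; rewrite -(leq_pmul2r (leq_ltn_trans (leq0n r) rq)); nia. Qed.

Lemma rad_dvdn n : 0 < n -> rad n %| n.
Proof. by move=> n0; rewrite {2}(Rn_mul_rad n0) dvdn_mull. Qed.

Lemma inB_rad_mul r n q j : inB r n -> prime q -> r < q -> 0 < j ->
  coprime j (primorial r) -> inB r (rad n * q * j).
Proof.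
case/andP=> n0 Sn0 pq rq j0 cj.
rewrite /inB !muln_gt0 rad_gt0 prime_gt0 //= j0; apply: S_gt0 => p.
rewrite mem_primes => /and3P [pp _]; rewrite !Euclid_dvdM // -orbA.
case/or3P => [pd | pq' | pj].
- by apply: (S_gt0_primes_gt Sn0); rewrite -primes_rad mem_primes pp rad_gt0.
- by move: pq'; rewrite dvdn_prime2 // => /eqP ->.
- exact: (coprime_primorial_dvd_gt cj pp pj).
Qed.

Lemma S_rad_mul_le r n q j : 0 < n -> prime q -> ~~ (q %| n) -> 0 < j ->
  j * (q - r) <= Rn n -> S r (rad n * q * j) <= S r n.
Proof.
move=> n0 pq qn j0 jR.
have qrad : ~~ (q %| rad n) by apply: contra qn => /dvdn_trans; apply; apply: rad_dvdn.
apply: (leq_trans (S_mul_le r _ j0)); first by rewrite muln_gt0 rad_gt0 prime_gt0.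
rewrite S_mul_prime ?rad_gt0 // (S_Rn_rad r n0) -mulnA [Rn n * _]mulnC leq_mul2l.
by rewrite mulnC jR orbT.
Qed.

Lemma inF_Rn_lt r n q J : inF r n -> prime q -> r < q -> ~~ (q %| n) ->
  jacob_prop (primorial r) J -> Rn n * r < J * q * (q - r).
Proof.
move=> [Bn Fn] pq rq qn jacobJ; have /andP [n0 _] := Bn.
rewrite ltnNge; apply/negP => JR.
have q0 := prime_gt0 pq.
have [j /andP [aj ja] cj] := jacob_prop_window (Rn n %/ q) jacobJ.
have j0 : 0 < j by apply: leq_ltn_trans aj.
have n_lt : n < rad n * q * j.
  rewrite {1}(Rn_mul_rad n0) mulnC -mulnA ltn_pmul2l ?rad_gt0 //.
  by apply: (leq_trans (ltn_ceil (Rn n) q0)); rewrite mulnC leq_mul2l aj orbT.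
have jR : j * (q - r) <= Rn n.
  apply: leq_trans (leq_mul ja (leqnn _)) (window_mul_le rq _ JR).
  by rewrite leq_trunc_div.
have := Fn _ (inB_rad_mul Bn pq rq j0 cj) n_lt.
by rewrite ltnNge S_rad_mul_le.
Qed.

Unset Implicit Arguments.

Theorem lemma3p5 (r n q J : nat) :
  0 < r -> inF r n -> is_Q1 r n q -> is_Jacobsthal (primorial r) J ->
  ((Rn n)%:Q < (J%:Q / r%:Q) * q%:Q * (q%:Q - r%:Q))%R.
Proof.
move=> r0 Fn [pq rq qn _] [_ jacobJ _].
have rhsE : (J%:Q / r%:Q * q%:Q * (q%:Q - r%:Q) = (J * q * (q - r))%:R / r%:R)%R.
  by rewrite !natrM natrB ?(ltnW rq) //; field; rewrite pnatr_eq0 -lt0n.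
rewrite rhsE ltr_pdivlMr ?ltr0n // -natrM ltr_nat.
exact: inF_Rn_lt Fn pq rq qn jacobJ.
Qed.
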